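(* Consider one execution of the Modified NCB algorithm with inputs $k$ and $W$, where $\sqrt T\le W\le T$, and assume $968kS\le T$. On the event $E$, every arm $i$ that is pulled at least once in Phase 2 satisfies $$\mu_i\ge\mu^*-4c\sqrt{\frac{\mu^*\log T}{T_i-1}},$$ where $T_i$ is the total number of times arm $i$ is pulled in this execution.
   Context: Bandit setup: $k$ arms, arm $i$ a distribution on $[0,1]$ with mean $\mu_i$, $\mu^*:=\max_i\mu_i>0$. $\log$ is the natural logarithm; $c:=3$; $T$ is the overall horizon and $S:=\frac{c^2\log T}{\mu^*}$. Modified NCB algorithm (inputs $k$, window $W$): maintain counts $n_i$ and empirical means $\widehat\mu_i$ (both initially $0$), round index $t=1$. Phase 1: while $\max_i n_i\widehat\mu_i\le 420c^2\log W$ and $t\le W$, pull a uniformly random arm, update, increment $t$. Phase 2: while $t\le W$, pull an arm maximizing $\overline{\mathrm{NCB}}_i:=\widehat\mu_i+2c\sqrt{2\widehat\mu_i\log W/n_i}$ (ties arbitrary), update, increment $t$. Canonical model: a $k\times T$ table $(Y_{i,s})$ of independent entries with $Y_{i,s}$ distributed as arm $i$, the $s$-th pull of arm $i$ yielding $Y_{i,s}$; $\widehat\mu_{i,s}:=\frac1s\sum_{r=1}^sY_{i,r}$. The uniform choices in Phase 1 are $U_1,U_2,\dots$, independent uniform in $[k]$ (independent of the table). Events: $E_1$: for every integer $r$ with $128kS\le r\le T$ and every arm $i$, the number of $r'\le r$ with $U_{r'}=i$ is at least $\frac{r}{2k}$ and at most $\frac{3r}{2k}$. $E_2$: for every arm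 $i$ with $\mu_i>\frac{\mu^*}{64}$ and every integer $s$ with $64S\le s\le T$, $|\mu_i-\widehat\mu_{i,s}|\le c\sqrt{\frac{\mu_i\log T}{s}}$. $E_3$: for every arm $j$ with $\mu_j\le\frac{\mu^*}{64}$ and every integer $s$ with $64S\le s\le T$, $\widehat\mu_{j,s}<\frac{\mu^*}{32}$. $E:=E_1\cap E_2\cap E_3$. *)

From mathcomp Require Import all_boot all_order all_algebra.
From mathcomp Require Import reals exp.
Set Implicit Arguments. Unset Strict Implicit. Unset Printing Implicit Defensive.
Import Order.TTheory GRing.Theory Num.Theory.
Local Open Scope ring_scope.

Section NCB.
Variable R : realType.

Definition cc : R := 3.

Definition mustar (k : nat) (mu : 'I_k -> R) : R := \big[Num.max/0]_(i < k) mu i.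

Definition Sval (k : nat) (mu : 'I_k -> R) (T : nat) : R :=
  cc ^+ 2 * ln (T%:R) / mustar mu.

(* canonical model: hat mu_{i,s} = (1/s) sum_{r=1}^s Y_{i,r}  (0 when s = 0) *)
Definition hatmu (k : nat) (Y : 'I_k -> nat -> R) (i : 'I_k) (s : nat) : R :=
  (s%:R)^-1 * \sum_(1 <= r < s.+1) Y i r.

(* a t = arm pulled at round t (t = 1, 2, ...).
   cnt a i t = n_i at the beginning of round t = #{ r | 1 <= r < t, a r = i } *)
Definition cnt (k : nat) (a : nat -> 'I_k) (i : 'I_k) (t : nat) : nat :=
  \sum_(1 <= r < t) (a r == i).

Definition empmean (k : nat) (Y : 'I_k -> nat -> R) (a : nat -> 'I_k)
  (i : 'I_k) (t : nat) : R := hatmu Y i (cnt a i t).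

(* Phase 1 loop test at the start of round t (the t <= W part is separate) *)
Definition p1test (k : nat) (Y : 'I_k -> nat -> R) (a : nat -> 'I_k)
  (W t : nat) : bool :=
  \big[Num.max/0]_(i < k) ((cnt a i t)%:R * empmean Y a i t)
    <= 420 * cc ^+ 2 * ln (W%:R).

(* round t (1 <= t <= W) is executed in Phase 1 iff the Phase 1 loop test
   succeeded at the start of each of the rounds 1..t *)
Definition in_phase1 (k : nat) (Y : 'I_k -> nat -> R) (a : nat -> 'I_k)
  (W t : nat) : Prop :=
  forall r, (1 <= r <= t)%N -> p1test Y a W r.

(* overline NCB_i at the start of round t; with the convention x / 0 = 0 *)
Definition NCBbar (k : nat) (Y : 'I_k -> nat -> R) (a : nat -> 'I_k)
  (W : nat) (i : 'I_k) (t : nat) : R :=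
  empmean Y a i t +
  2 * cc * Num.sqrt (2 * empmean Y a i t * ln (W%:R) / (cnt a i t)%:R).

(* a is a possible execution of Modified NCB (inputs k, W), with Phase 1
   uniform choices U and reward table Y; ties in Phase 2 broken arbitrarily *)
Definition is_execution (k : nat) (Y : 'I_k -> nat -> R) (U : nat -> 'I_k)
  (W : nat) (a : nat -> 'I_k) : Prop :=
  forall t, (1 <= t <= W)%N ->
    (in_phase1 Y a W t -> a t = U t) /\
    (~ in_phase1 Y a W t -> forall j, NCBbar Y a W j t <= NCBbar Y a W (a t) t).

Definition Tpulls (k : nat) (a : nat -> 'I_k) (W : nat) (i : 'I_k) : nat :=
  cnt a i W.+1.

Definition pulled_in_phase2 (k : nat) (Y : 'I_k -> nat -> R) (a : nat -> 'I_k)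
  (W : nat) (i : 'I_k) : Prop :=
  exists t, [/\ (1 <= t <= W)%N, ~ in_phase1 Y a W t & a t = i].

Definition ucount (k : nat) (U : nat -> 'I_k) (i : 'I_k) (r : nat) : nat :=
  \sum_(1 <= r' < r.+1) (U r' == i).

Definition E1 (k : nat) (mu : 'I_k -> R) (T : nat) (U : nat -> 'I_k) : Prop :=
  forall (r : nat) (i : 'I_k),
    128 * k%:R * Sval mu T <= r%:R -> (r <= T)%N ->
    (r%:R : R) / (2 * k%:R) <= (ucount U i r)%:R /\
    ((ucount U i r)%:R : R) <= 3 * r%:R / (2 * k%:R).

Definition E2 (k : nat) (mu : 'I_k -> R) (T : nat) (Y : 'I_k -> nat -> R) : Prop :=
  forall (i : 'I_k) (s : nat), mustar mu / 64 < mu i ->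
    64 * Sval mu T <= s%:R -> (s <= T)%N ->
    `|mu i - hatmu Y i s| <= cc * Num.sqrt (mu i * ln (T%:R) / s%:R).

Definition E3 (k : nat) (mu : 'I_k -> R) (T : nat) (Y : 'I_k -> nat -> R) : Prop :=
  forall (j : 'I_k) (s : nat), mu j <= mustar mu / 64 ->
    64 * Sval mu T <= s%:R -> (s <= T)%N ->
    hatmu Y j s < mustar mu / 32.

Definition Ev (k : nat) (mu : 'I_k -> R) (T : nat) (U : nat -> 'I_k)
  (Y : 'I_k -> nat -> R) : Prop :=
  [/\ E1 mu T U, E2 mu T Y & E3 mu T Y].

End NCB.

(* Phase 1 cannot end before about 128 k S uniform rounds: with fewer rounds, E1 gives every
   arm at most about 192 S samples, and E2/E3 then bound its reward sum n_i hat mu_i by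
   1890 log T <= 420 c^2 log W, so the Phase 1 test would still pass.  Hence, by E1 again, every
   arm has at least 64 S samples throughout Phase 2, where E2 and E3 control all empirical
   means.  At the last round t in which arm i is pulled, its NCB index dominates that of a best
   arm, which by E2 is at least mu^*.  By E3 an arm with mu_i <= mu^*/64 has index below mu^*,
   and otherwise E2 turns "index of i >= mu^*" into the bound, with n_i(t) = T_i - 1. *)

From mathcomp Require Import all_boot all_order all_algebra.
From mathcomp Require Import reals exp.
From mathcomp Require Import ring lra zify.
Import Order.TTheory GRing.Theory Num.Theory.
Local Open Scope ring_scope.

Definition ncb_index {R : rcfType} (h lw n : R) : R :=
  h + 2 * 3 * Num.sqrt (2 * h * lw / n).

Lemma NCBbarE (R : realType) k (Y : 'I_k -> nat -> R) a W j t :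
  NCBbar Y a W j t = ncb_index (empmean Y a j t) (ln W%:R) (cnt a j t)%:R.
Proof. by []. Qed.

Section ConfidenceBounds.
Context {R : rcfType}.
Implicit Types (a mu mi h L lw n v b : R).

Lemma sqrtr_le_of_sqr v b : 0 <= b -> v <= b ^+ 2 -> Num.sqrt v <= b.
Proof.
move=> b_ge0 vb; have [v_ge0|v_lt0] := leP 0 v; last by rewrite ltr0_sqrtr.
by rewrite -(ger0_norm b_ge0) -sqrtr_sqr ler_wsqrtr.
Qed.

Lemma ler_sqrtr_of_sqr v b : 0 <= b -> b ^+ 2 <= v -> b <= Num.sqrt v.
Proof. by move=> b_ge0 bv; rewrite -(ger0_norm b_ge0) -sqrtr_sqr ler_wsqrtr. Qed.

Lemma sqrtrMl_div a L n : 0 <= a -> Num.sqrt (a * L / n) = Num.sqrt a * Num.sqrt (L / n).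
Proof. by move=> a_ge0; rewrite -mulrA sqrtrM. Qed.

(* [64 * (3 ^+ 2 * L / mu)] is the threshold [64 S] of the events E2 and E3. *)
Lemma explored_sqrt_ratio mu L n : 0 < mu -> 0 < L -> 64 * (3 ^+ 2 * L / mu) <= n ->
  0 < n /\ 24 * Num.sqrt (L / n) <= Num.sqrt mu.
Proof.
move=> mu_gt0 L_gt0 hn.
have n_gt0 : 0 < n by apply: lt_le_trans hn; rewrite !mulr_gt0 ?invr_gt0.
have Ln : 576 * L <= mu * n.
  have -> : 576 * L = mu * (64 * (3 ^+ 2 * L / mu)) by field; rewrite gt_eqF.
  by rewrite ler_wpM2l // ltW.
have [L_ge0 n_ge0] := (ltW L_gt0, ltW n_gt0).
split=> //; apply: ler_sqrtr_of_sqr; first by rewrite mulr_ge0 ?sqrtr_ge0.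
rewrite exprMn sqr_sqrtr; last by rewrite divr_ge0.
rewrite mulrA ler_pdivrMr //; nra.
Qed.

Lemma ncb_index_ge_mean mu L lw h n : 0 < mu -> 0 < L -> 0 <= h -> L <= 2 * lw ->
  64 * (3 ^+ 2 * L / mu) <= n -> `|mu - h| <= 3 * Num.sqrt (mu * L / n) ->
  mu <= ncb_index h lw n.
Proof.
move=> mu_gt0 L_gt0 h_ge0 Llw hn hd.
have [n_gt0 hz] := explored_sqrt_ratio _ _ _ mu_gt0 L_gt0 hn.
have [mu_ge0 L_ge0 n_ge0] := And3 (ltW mu_gt0) (ltW L_gt0) (ltW n_gt0).
rewrite sqrtrMl_div // in hd.
set y := Num.sqrt mu in hz hd; set z := Num.sqrt (L / n) in hz hd.
have y2 : y ^+ 2 = mu by rewrite sqr_sqrtr.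
have [y_ge0 z_ge0] : 0 <= y /\ 0 <= z by rewrite !sqrtr_ge0.
set x := Num.sqrt h.
have x2 : x ^+ 2 = h by rewrite sqr_sqrtr.
have x_ge0 : 0 <= x by exact: sqrtr_ge0.
have hs : x * z <= Num.sqrt (2 * h * lw / n).
  apply: ler_sqrtr_of_sqr; first exact: mulr_ge0.
  rewrite exprMn x2 sqr_sqrtr; last by rewrite divr_ge0.
  rewrite mulrA ler_pM2r ?invr_gt0 //; nra.
have hd' : mu - h <= 3 * (y * z) by apply: le_trans hd; exact: ler_norm.
have yx : y <= 2 * x by nra.
rewrite /ncb_index; nra.
Qed.

Lemma ncb_index_lt_of_small_mean mu L lw h n : 0 < mu -> 0 < L -> 0 <= h -> h < mu / 32 ->
  lw <= L -> 64 * (3 ^+ 2 * L / mu) <= n -> ncb_index h lw n < mu.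
Proof.
move=> mu_gt0 L_gt0 h_ge0 h_small lwL hn.
have [n_gt0 hz] := explored_sqrt_ratio _ _ _ mu_gt0 L_gt0 hn.
have [mu_ge0 L_ge0 n_ge0] := And3 (ltW mu_gt0) (ltW L_gt0) (ltW n_gt0).
set y := Num.sqrt mu in hz; set z := Num.sqrt (L / n) in hz.
have y2 : y ^+ 2 = mu by rewrite sqr_sqrtr.
have [y_ge0 z_ge0] : 0 <= y /\ 0 <= z by rewrite !sqrtr_ge0.
have hs : Num.sqrt (2 * h * lw / n) <= y / 4 * z.
  apply: sqrtr_le_of_sqr; first by rewrite mulr_ge0 ?divr_ge0.
  rewrite exprMn sqr_sqrtr; last by rewrite divr_ge0.
  rewrite -mulrA.
  have lw_n : lw / n <= L / n by rewrite ler_pM2r ?invr_gt0.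
  apply: (@le_trans _ _ (2 * h * (L / n))); first by rewrite ler_wpM2l ?mulr_ge0.
  rewrite ler_wpM2r ?divr_ge0//; nra.
rewrite /ncb_index; nra.
Qed.

Lemma mean_ge_of_ncb_index_ge mu L lw h n mi : 0 < mu -> 0 < L -> 0 <= h ->
  0 <= mi <= mu -> 0 <= lw <= L -> 64 * (3 ^+ 2 * L / mu) <= n ->
  `|mi - h| <= 3 * Num.sqrt (mi * L / n) -> mu <= ncb_index h lw n ->
  mu - 4 * 3 * Num.sqrt (mu * L / n) <= mi.
Proof.
move=> mu_gt0 L_gt0 h_ge0 /andP[mi_ge0 mi_le] /andP[lw_ge0 lwL] hn hd.
rewrite /ncb_index => dominates.
have [n_gt0 hz] := explored_sqrt_ratio _ _ _ mu_gt0 L_gt0 hn.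
have [mu_ge0 L_ge0 n_ge0] := And3 (ltW mu_gt0) (ltW L_gt0) (ltW n_gt0).
rewrite sqrtrMl_div // in hd; rewrite sqrtrMl_div //.
set y := Num.sqrt mu in hz *; set z := Num.sqrt (L / n) in hz hd *.
have y2 : y ^+ 2 = mu by rewrite sqr_sqrtr.
have [y_ge0 z_ge0] : 0 <= y /\ 0 <= z by rewrite !sqrtr_ge0.
set u := Num.sqrt mi in hd.
have u2 : u ^+ 2 = mi by rewrite sqr_sqrtr.
have u_ge0 : 0 <= u by exact: sqrtr_ge0.
have uy : u <= y by rewrite ler_wsqrtr.
have hd' : h - mi <= 3 * (u * z) by apply: le_trans hd; rewrite distrC ler_norm.
have h_le : h <= 9 / 8 * y ^+ 2 by nra.
have hs : Num.sqrt (2 * h * lw / n) <= 3 / 2 * y * z.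
  apply: sqrtr_le_of_sqr; first by apply: mulr_ge0 => //; nra.
  rewrite exprMn sqr_sqrtr; last by rewrite divr_ge0.
  rewrite -mulrA.
  have lw_n : lw / n <= L / n by rewrite ler_pM2r ?invr_gt0.
  apply: (@le_trans _ _ (2 * h * (L / n))); first by rewrite ler_wpM2l ?mulr_ge0.
  rewrite ler_wpM2r ?divr_ge0//; nra.
nra.
Qed.

(* [1890 L] is the Phase 1 threshold [420 c^2 (L / 2)] once [L <= 2 ln W]. *)
Lemma explored_reward_sum_le mu L Np h mj : 0 < mu <= 1 -> 1 / 2 <= L ->
  64 * (3 ^+ 2 * L / mu) <= Np <= 192 * (3 ^+ 2 * L / mu) + 3 / 2 -> 0 <= h ->
  (0 <= mj <= mu /\ `|mj - h| <= 3 * Num.sqrt (mj * L / Np)) \/ h < mu / 32 ->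
  Np * h <= 1890 * L.
Proof.
move=> /andP[mu_gt0 mu_le1] L_ge /andP[Np_ge Np_le] h_ge0.
set S := 3 ^+ 2 * L / mu in Np_ge Np_le.
have SmuE : S * mu = 9 * L by rewrite /S; field; rewrite gt_eqF.
have S_ge : 9 * L <= S by nra.
have Np_gt0 : 0 < Np by nra.
case=> [[/andP[mj_ge0 mj_le] hd]|h_small]; last first.
  have : Np * h <= Np * (mu / 32) by rewrite ler_wpM2l // ltW.
  nra.
set v := Num.sqrt (mj * L / Np) in hd.
have L_ge0 : 0 <= L by lra.
have v2 : v ^+ 2 = mj * L / Np by rewrite sqr_sqrtr // divr_ge0 ?mulr_ge0 // ltW.
have v_ge0 : 0 <= v by exact: sqrtr_ge0.
have Npv2 : (Np * v) ^+ 2 <= (48 * L) ^+ 2.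
  have -> : (Np * v) ^+ 2 = Np * mj * L by rewrite exprMn v2; field; rewrite gt_eqF.
  have : Np * mj <= 256 * S * mu by rewrite (@le_trans _ _ (Np * mu)) ?ler_wpM2l ?ler_wpM2r //; nra.
  nra.
have Npv : Np * v <= 48 * L by nra.
have hd' : h - mj <= 3 * v by apply: le_trans hd; rewrite distrC ler_norm.
nra.
Qed.

End ConfidenceBounds.

Section Logarithm.
Context {R : realType}.

Lemma ln_ge_half (x : R) : 2 <= x -> 1 / 2 <= ln x.
Proof.
move=> x_ge2; have x_gt0 : 0 < x by lra.
have : -1 < x^-1 - 1 by rewrite ltrBrDr addrC subrr invr_gt0.
move/le_ln1Dx; rewrite [1 + _]addrCA subrr addr0 lnV ?posrE //.
have xVx : x^-1 * x = 1 by rewrite mulVf ?gt_eqF.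
have : 0 < x^-1 by rewrite invr_gt0.
nra.
Qed.

Lemma ln_le_double_of_sqrt_le (x y : R) : 0 < x -> Num.sqrt x <= y -> ln x <= 2 * ln y.
Proof.
move=> x_gt0 sx_le; have y_gt0 : 0 < y by apply: lt_le_trans sx_le; rewrite sqrtr_gt0.
have : x <= y ^+ 2.
  have s2 : Num.sqrt x ^+ 2 = x by rewrite sqr_sqrtr ?ltW.
  have := sqrtr_ge0 x; nra.
by rewrite -ler_ln ?posrE ?exprn_gt0 // lnXn // mulr2n => ?; lra.
Qed.

End Logarithm.

Section Counting.
Context {k : nat} (a : nat -> 'I_k) (i : 'I_k).

Lemma ucountE (U : nat -> 'I_k) r : ucount U i r = cnt U i r.+1.
Proof. by []. Qed.

Lemma cnt_mono t1 t2 : (t1 <= t2)%N -> (cnt a i t1 <= cnt a i t2)%N.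
Proof.
rewrite /cnt; case: t1 => [|t1] le_t; first by rewrite big_geq.
by rewrite [X in (_ <= X)%N](big_cat_nat _ (n := t1.+1)) //= leq_addr.
Qed.

Lemma cnt_le_pred t : (cnt a i t <= t.-1)%N.
Proof.
rewrite /cnt -[t.-1]muln1 -subn1 -sum_nat_const_nat.
by apply: leq_sum => r _; exact: leq_b1.
Qed.

Lemma eq_cnt (b : nat -> 'I_k) t : (forall r, (1 <= r < t)%N -> a r = b r) ->
  cnt a i t = cnt b i t.
Proof. by move=> ab; apply: eq_big_nat => r /ab ->. Qed.

Lemma cnt_last_pull t n : (0 < t <= n)%N -> a t = i ->
  (forall r, (t < r <= n)%N -> a r != i) -> cnt a i n.+1 = (cnt a i t).+1.
Proof.
move=> /andP[t_gt0 le_tn] at_i later.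
rewrite /cnt [LHS](big_cat_nat _ (n := t.+1)) //= big_nat_recr //= at_i eqxx.
suff -> : (\sum_(t.+1 <= r < n.+1) (a r == i) = 0)%N by rewrite addn0 addn1.
rewrite big_nat_cond big1 // => r /andP[r_range _].
by apply/eqP; rewrite eqb0 later.
Qed.

End Counting.

Section Execution.
Context {R : realType} {k : nat} {Y : 'I_k -> nat -> R} {a : nat -> 'I_k} {W : nat}.

Lemma hatmu_ge0 i s : (forall r, 0 <= Y i r) -> 0 <= hatmu Y i s.
Proof. by move=> Y_ge0; rewrite /hatmu mulr_ge0 ?invr_ge0 ?sumr_ge0. Qed.

Lemma natr_mul_hatmu_mono i s1 s2 : (forall r, 0 <= Y i r) -> (s1 <= s2)%N ->
  s1%:R * hatmu Y i s1 <= s2%:R * hatmu Y i s2.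
Proof.
have mulE s : s%:R * hatmu Y i s = \sum_(1 <= r < s.+1) Y i r.
  case: s => [|s]; rewrite /hatmu; first by rewrite big_geq ?mul0r.
  by rewrite mulrA mulfV ?mul1r // pnatr_eq0.
move=> Y_ge0 le_s; rewrite !mulE (big_cat_nat _ (n := s1.+1) (p := s2.+1)) //=.
by rewrite lerDl sumr_ge0.
Qed.

Lemma in_phase1_le {t t' : nat} : (t <= t')%N -> in_phase1 Y a W t' -> in_phase1 Y a W t.
Proof. by move=> le_t ph r /andP[r_ge1 le_r]; rewrite ph // r_ge1 (leq_trans le_r). Qed.

Lemma first_failed_test t : ~ in_phase1 Y a W t ->
  exists r, [/\ (0 < r <= t)%N, ~~ p1test Y a W r & in_phase1 Y a W r.-1].
Proof.
move=> not_ph.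
have ex_fail : exists r, (0 < r <= t)%N && ~~ p1test Y a W r.
  have /hasP[r] : has (fun r => ~~ p1test Y a W r) (iota 1 t).
    apply: contraT; rewrite -all_predC => /allP all_pass; case: not_ph => r r_range.
    by apply/negPn/all_pass; rewrite mem_iota add1n ltnS.
  by rewrite mem_iota add1n ltnS => r_range fail; exists r; rewrite r_range.
case: (ex_minnP ex_fail) => r /andP[r_range fail] r_min; exists r; split=> //.
move=> r' r'_range; apply: contraT => fail'.
have := r_min r'; rewrite fail' andbT; lia.
Qed.

Lemma p1test_fail_witness r : 0 <= ln (W%:R : R) -> ~~ p1test Y a W r ->
  exists j, 420 * cc R ^+ 2 * ln W%:R < (cnt a j r)%:R * empmean Y a j r.
Proof.
move=> lnW_ge0 fail; have /existsP[j exceeds] : [exists j, 420 * cc R ^+ 2 * ln W%:R <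
    (cnt a j r)%:R * empmean Y a j r].
  apply: contraNT fail => /existsPn below; apply/bigmax_leP; split=> [|j _].
    by rewrite !mulr_ge0.
  by rewrite leNgt below.
by exists j.
Qed.

Lemma phase1_cnt U r j : is_execution Y U W a -> (0 < r <= W)%N ->
  in_phase1 Y a W r.-1 -> cnt a j r = ucount U j r.-1.
Proof.
move=> exec r_range ph; rewrite ucountE prednK; last by case/andP: r_range.
apply: eq_cnt => t t_range; have [to_U _] : _ /\ _ := exec t ltac:(lia).
by apply/to_U/(in_phase1_le _ ph); lia.
Qed.

Lemma last_pull_in_phase2 i : pulled_in_phase2 Y a W i ->
  exists t, [/\ (0 < t <= W)%N, ~ in_phase1 Y a W t, a t = i
             & Tpulls a W i = (cnt a i t).+1].
Proof.
case=> t0 [t0_range not_ph0 at0].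
have ex_pull : exists t, (t0 <= t <= W)%N && (a t == i).
  by exists t0; rewrite leqnn at0 eqxx; case/andP: t0_range => _ ->.
have max_le_W t : (t0 <= t <= W)%N && (a t == i) -> (t <= W)%N by case/andP=> /andP[].
case: (ex_maxnP ex_pull max_le_W) => t /andP[t_range /eqP at_i] t_max.
have t_pos : (0 < t <= W)%N by case/andP: t0_range; lia.
exists t; split=> //.
  by case/andP: t_range => t0_le _ ph; exact: not_ph0 (in_phase1_le t0_le ph).
apply: cnt_last_pull => // r r_range; apply: contraTneq isT => ar_i.
have := t_max r; rewrite ar_i eqxx andbT; lia.
Qed.

End Execution.

Section Mustar.
Context {R : realType} {k : nat} (mu : 'I_k -> R).

Lemma mustar_le1 : (forall j, mu j <= 1) -> mustar mu <= 1.
Proof. by move=> mu_le1; apply: bigmax_le => // j _; exact: mu_le1. Qed.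

Lemma mustar_attained (j : 'I_k) : (forall j, 0 <= mu j) -> exists j', mu j' = mustar mu.
Proof.
by move=> mu_ge0; exists [arg max_(j' > j) mu j']%O; rewrite /mustar (bigmax_eq_arg _ j).
Qed.

End Mustar.

Section ModifiedNCB.
Variables (R : realType) (k : nat) (mu : 'I_k -> R) (T W : nat).
Variables (U : nat -> 'I_k) (Y : 'I_k -> nat -> R) (a : nat -> 'I_k).
Hypotheses (mu01 : forall j, 0 <= mu j <= 1) (Y_ge0 : forall j s, 0 <= Y j s).
Hypothesis mustar_gt0 : 0 < mustar mu.
Hypotheses (lnT_ge : 1 / 2 <= ln (T%:R : R)) (lnT_le : ln (T%:R : R) <= 2 * ln W%:R).
Hypotheses (lnW_le : ln (W%:R : R) <= ln T%:R) (W_le_T : (W <= T)%N).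
Hypothesis T_large : 968 * k%:R * Sval mu T <= T%:R.
Hypotheses (exec : is_execution Y U W a) (E : Ev mu T U Y).

Local Notation M := (mustar mu).
Local Notation S := (Sval mu T).
Local Notation L := (ln (T%:R : R)).

Lemma Sval_ge1 : 1 <= S.
Proof.
have M_le1 := mustar_le1 mu (fun j => proj2 (andP (mu01 j))).
(* The copies of [ln T] here and in [lnT_ge] are elaborated differently; [set] merges them
   into one atom for [nra]. *)
rewrite /Sval /cc ler_pdivlMr // mul1r; move: lnT_ge; set L' := ln _ => L_ge.
by rewrite (@le_trans _ _ 1) //; nra.
Qed.

Lemma E1_window j n : 128 * k%:R * S <= n%:R <= 128 * k%:R * S + 1 -> (n <= T)%N ->
  64 * S <= (ucount U j n)%:R <= 192 * S + 3 / 2.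
Proof.
case/andP=> n_ge n_le n_le_T; case: E => E1 _ _.
have [lo hi] := E1 n j n_ge n_le_T.
have k_gt0 : (0 < k)%N := leq_ltn_trans (leq0n j) (ltn_ord j).
have k_ge1 : 1 <= k%:R :> R by rewrite ler1n.
move: lo hi; rewrite ler_pdivrMr ?ler_pdivlMr ?mulr_gt0 ?ltr0n // => lo hi.
by apply/andP; split; nra.
Qed.

Lemma explored_reward_le j Np : 64 * S <= Np%:R <= 192 * S + 3 / 2 -> (Np <= T)%N ->
  Np%:R * hatmu Y j Np <= 1890 * L.
Proof.
move=> Np_range Np_le_T; case: E => _ E2 E3.
have M_le1 := mustar_le1 mu (fun j => proj2 (andP (mu01 j))).
case/andP: (Np_range) => Np_ge _.
apply: (explored_reward_sum_le M L _ _ (mu j)) => //; first by rewrite mustar_gt0.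
  exact: hatmu_ge0.
have [mj_small|mj_big] := lerP (mu j) (M / 64); first by right; exact: E3.
by left; split; [rewrite (andP (mu01 j)).1 le_bigmax | exact: E2].
Qed.

Lemma phase2_starts_late r : (0 < r <= W)%N -> ~~ p1test Y a W r ->
  in_phase1 Y a W r.-1 -> 128 * k%:R * S <= r.-1%:R.
Proof.
move=> r_range fail ph; rewrite leNgt; apply/negP => r_small.
(* Compare with the E1 count at the first integer [n] above [128 k S]. *)
move: lnT_ge lnT_le; set lw := ln W%:R; set L' := ln _ => L_ge L_le.
have lw_ge0 : 0 <= lw by lra.
have [j exceeds] := p1test_fail_witness r lw_ge0 fail.
have k_ge1 : 1 <= k%:R :> R by rewrite ler1n (leq_ltn_trans (leq0n j) (ltn_ord j)).
have kS_ge1 : 1 <= k%:R * S by have := Sval_ge1; nra.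
set n := (Num.truncn (128 * k%:R * S)).+1.
have n_gt : 128 * k%:R * S < n%:R by exact: truncnS_gt.
have n_le : n%:R <= 128 * k%:R * S + 1 by rewrite /n -natr1 lerD2r truncn_le; nra.
have n_le_T : (n <= T)%N.
  by rewrite -(ler_nat R) (le_trans n_le) // (le_trans _ T_large) //; nra.
have r_lt_n : (r.-1 < n)%N by rewrite -(ltr_nat R); lra.
have /E1_window : 128 * k%:R * S <= n%:R <= 128 * k%:R * S + 1 by rewrite n_le ltW.
move=> /(_ j n_le_T) Np_range.
have Np_le_T : (ucount U j n <= T)%N by rewrite ucountE (leq_trans (cnt_le_pred _ _ _)).
have := explored_reward_le j _ Np_range Np_le_T.
have : (cnt a j r)%:R * empmean Y a j r <= (ucount U j n)%:R * hatmu Y j (ucount U j n).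
  rewrite /empmean (phase1_cnt U r j exec r_range ph) natr_mul_hatmu_mono //.
  by rewrite !ucountE cnt_mono // ltnW.
move: exceeds; rewrite /cc -/lw -/L'; lra.
Qed.

Lemma explored_in_phase2 t j : (0 < t <= W)%N -> ~ in_phase1 Y a W t ->
  64 * S <= (cnt a j t)%:R.
Proof.
move=> t_range not_ph.
have [r [r_range fail ph]] := first_failed_test t not_ph.
have r_le_W : (0 < r <= W)%N by lia.
have late := phase2_starts_late r r_le_W fail ph.
case: E => E1 _ _; have [lo _] := E1 r.-1 j late ltac:(lia).
have k_gt0 : (0 < k)%N := leq_ltn_trans (leq0n j) (ltn_ord j).
apply: (@le_trans _ _ (cnt a j r)%:R); last by rewrite ler_nat cnt_mono //; lia.
rewrite (phase1_cnt U r j exec r_le_W ph); apply: le_trans lo.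
by rewrite ler_pdivlMr ?mulr_gt0 ?ltr0n //; nra.
Qed.

Lemma cnt_le_T t j : (t <= W)%N -> (cnt a j t <= T)%N.
Proof. by move=> t_le_W; rewrite (leq_trans (cnt_le_pred _ _ _)) //; lia. Qed.

Lemma mustar_le_NCBbar t : (0 < t <= W)%N -> ~ in_phase1 Y a W t ->
  M <= NCBbar Y a W (a t) t.
Proof.
move=> t_range not_ph; have [_ best] := exec t t_range.
have mu_ge0 j : 0 <= mu j by case/andP: (mu01 j).
have [j0 mu_j0] := mustar_attained mu (a t) mu_ge0.
apply: le_trans (best not_ph j0); rewrite NCBbarE -mu_j0; case: E => _ E2 _.
have explored : 64 * S <= (cnt a j0 t)%:R by exact: explored_in_phase2.
apply: (ncb_index_ge_mean _ L) => //; first by rewrite mu_j0.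
- by move: lnT_ge; set L' := ln _; lra.
- exact: hatmu_ge0.
- by rewrite mu_j0.
apply: E2 => //; last by apply: cnt_le_T; case/andP: t_range.
by rewrite mu_j0 ltr_pdivrMr // ltr_pMr // ltr1n.
Qed.

Lemma pulled_arm_mean_ge t : (0 < t <= W)%N -> ~ in_phase1 Y a W t ->
  M - 4 * cc R * Num.sqrt (M * L / (cnt a (a t) t)%:R) <= mu (a t).
Proof.
move=> t_range not_ph; have dominates := mustar_le_NCBbar t t_range not_ph.
rewrite NCBbarE in dominates; case: E => _ E2 E3.
have explored : 64 * S <= (cnt a (a t) t)%:R by exact: explored_in_phase2.
have cnt_le : (cnt a (a t) t <= T)%N by apply: cnt_le_T; case/andP: t_range.
have L_gt0 : 0 < L by move: lnT_ge; set L' := ln _; lra.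
have lnW_ge0 : 0 <= ln (W%:R : R) by move: lnT_ge lnT_le; set L' := ln _; lra.
have [small|large] := lerP (mu (a t)) (M / 64).
  suff : ncb_index (empmean Y a (a t) t) (ln W%:R) (cnt a (a t) t)%:R < M.
    by rewrite ltNge dominates.
  apply: (ncb_index_lt_of_small_mean _ L) => //; first exact: hatmu_ge0.
  exact: E3.
apply: (mean_ge_of_ncb_index_ge _ _ (ln W%:R) (empmean Y a (a t) t)) => //.
- exact: hatmu_ge0.
- by rewrite (andP (mu01 _)).1 le_bigmax.
- by rewrite lnW_ge0.
- exact: E2.
Qed.

End ModifiedNCB.

Theorem lemma11 (R : realType) (k : nat) (mu : 'I_k -> R) (T W : nat)
  (U : nat -> 'I_k) (Y : 'I_k -> nat -> R) (a : nat -> 'I_k) :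
  (forall i, 0 <= mu i <= 1) ->
  (forall i s, 0 <= Y i s <= 1) ->
  0 < mustar mu ->
  Num.sqrt (T%:R : R) <= W%:R -> (W <= T)%N ->
  968 * k%:R * Sval mu T <= T%:R ->
  is_execution Y U W a ->
  Ev mu T U Y ->
  forall i : 'I_k, pulled_in_phase2 Y a W i ->
    (1 < Tpulls a W i)%N ->
    mustar mu - 4 * cc R * Num.sqrt (mustar mu * ln (T%:R) / ((Tpulls a W i).-1)%:R)
      <= mu i.
Proof.
move=> mu01 Y01 mustar_gt0 sqrtT_le W_le_T T_large exec E i pulled Ti_gt1.
have [t [t_range not_ph at_i ->]] := last_pull_in_phase2 i pulled.
have W_ge2 : (2 <= W)%N by rewrite (leq_trans Ti_gt1) // cnt_le_pred.
have T_gt0 : (0 : R) < T%:R by rewrite ltr0n; lia.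
rewrite -at_i; apply: (@pulled_arm_mean_ge R k mu T W U Y a) => //.
- by move=> j s; case/andP: (Y01 j s).
- by apply: ln_ge_half; rewrite ler_nat; lia.
- exact: ln_le_double_of_sqrt_le.
- by rewrite ler_ln ?posrE ?ler_nat ?ltr0n //; lia.
Qed.
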